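(* Let $(X,\Sigma)$ be an implicational base with closure operator $\phi$, let $\mathcal{B}^+$ be an antichain of $\mathcal{L}(\Sigma)$, and let $\mathcal{H}=\{X\setminus B\mid B\in\mathcal{B}^+\}$. If $T$ is a transversal of $\mathcal{H}$, then every $T^*\in\mathrm{spex}(T)$ is a transversal of $\mathcal{H}$. In particular, every minimal transversal of $\mathcal{H}$ is independent with respect to $\phi$.
   Context: An implicational base $(X,\Sigma)$ consists of a finite set $X$ and a finite set $\Sigma$ of implications $A\rightarrow b$ with $A\subseteq X$ and $b\in X$. A set $C\subseteq X$ is closed in $\Sigma$ if for every $A\rightarrow b\in\Sigma$, $A\not\subseteq C$ or $b\in C$; $\phi(C)$ denotes the smallest closed set containing $C$. $\mathcal{L}(\Sigma)$ is the lattice of closed sets ordered by inclusion; an antichain of it is a family of pairwise inclusion-incomparable closed sets. A transversal of $\mathcal{H}\subseteq 2^X$ is a set meeting every member of $\mathcal{H}$; minimal means inclusion-minimal. A set $T\subseteq X$ is independent w.r.t. $\phi$ if $x\notin\phi(T\setminus\{x\})$ for every $x\in T$. For $T,I\subseteq X$, $T$ is a generating set of $I$ if $T\subseteq I\subseteq\phi(T)$, and it is minimal if $I\not\subseteq\phi(T\setminus\{x\})$ for all $x\in T$. $\mathrm{spex}(I)$ denotes the set of all minimal generating sets of $I$. *)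

(* The ground set X is modelled as a finite type T (X = [set: T]). *)
From mathcomp Require Import all_boot all_order.
Set Implicit Arguments. Unset Strict Implicit. Unset Printing Implicit Defensive.

(* An implicational base: a finite list of implications A -> b, A ⊆ X, b ∈ X. *)
Definition impl_base (T : finType) := seq ({set T} * T).

Definition closedb (T : finType) (Sigma : impl_base T) (C : {set T}) : bool :=
  @all ({set T} * T) (fun ab : {set T} * T => ~~ (ab.1 \subset C) || (ab.2 \in C)) Sigma.

Definition phi (T : finType) (Sigma : impl_base T) (C : {set T}) : {set T} :=
  \bigcap_(D : {set T} | closedb Sigma D && (C \subset D)) D.

Definition closed_antichain (T : finType) (Sigma : impl_base T)
    (B : {set {set T}}) : Prop :=
  (forall C, C \in B -> closedb Sigma C) /\
  (forall C D, C \in B -> D \in B -> C \subset D -> C = D).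

Definition hg_transversal (T : finType) (H : {set {set T}}) (S : {set T}) : bool :=
  [forall E in H, S :&: E != set0].

Definition minimal_transversal (T : finType) (H : {set {set T}}) (S : {set T}) : Prop :=
  minset (hg_transversal H) S.

Definition independent (T : finType) (Sigma : impl_base T) (S : {set T}) : Prop :=
  forall x, x \in S -> x \notin phi Sigma (S :\ x).

Definition spex (T : finType) (Sigma : impl_base T) (I : {set T}) : {set {set T}} :=
  [set S : {set T} | [&& S \subset I, I \subset phi Sigma S &
      [forall x in S, ~~ (I \subset phi Sigma (S :\ x))]]].

(* A member B of Bp misses a set S exactly when S \subset B, and since B is
   closed, S \subset B forces phi S \subset B.  Hence enlarging S to any set
   whose closure contains S cannot destroy transversality of the complements:
   this covers every S' in spex(S), for which S \subset phi S', and for a minimal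
   transversal S with x \in phi(S :\ x), the smaller transversal S :\ x. *)
From mathcomp Require Import all_boot all_order.

Set Implicit Arguments.
Unset Strict Implicit.
Unset Printing Implicit Defensive.

Section Closure.

Variables (T : finType) (Sigma : impl_base T).

Lemma phi_sub_closed (C D : {set T}) :
  closedb Sigma D -> C \subset D -> phi Sigma C \subset D.
Proof. by move=> clD sCD; apply: bigcap_inf; rewrite clD sCD. Qed.

Lemma subset_phi (C : {set T}) : C \subset phi Sigma C.
Proof. by apply/bigcapsP => D /andP[]. Qed.

End Closure.

Section ComplementTransversals.

Variables (T : finType) (Sigma : impl_base T) (Bp : {set {set T}}).
Hypothesis Bp_closed : forall B, B \in Bp -> closedb Sigma B.

Lemma hg_transversal_compl (S : {set T}) :
  hg_transversal [set ~: B | B in Bp] S = [forall B in Bp, ~~ (S \subset B)].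
Proof.
apply/forall_inP/forall_inP => [trS B BBp | trS _ /imsetP[B BBp ->]].
  by have := trS _ (imset_f _ BBp); rewrite setI_eq0 -subsets_disjoint.
by rewrite setI_eq0 -subsets_disjoint trS.
Qed.

Lemma hg_transversal_phi (S S' : {set T}) :
  hg_transversal [set ~: B | B in Bp] S -> S \subset phi Sigma S' ->
  hg_transversal [set ~: B | B in Bp] S'.
Proof.
rewrite !hg_transversal_compl => /forall_inP trS sSphi.
apply/forall_inP => B BBp; apply: contra (trS B BBp) => sS'B.
exact: subset_trans sSphi (phi_sub_closed (Bp_closed BBp) sS'B).
Qed.

Lemma minimal_transversal_independent (S : {set T}) :
  minimal_transversal [set ~: B | B in Bp] S -> independent Sigma S.
Proof.
move=> /minsetP[trS minS] x xS; apply/negP => x_phi.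
have sSphi : S \subset phi Sigma (S :\ x).
  apply/subsetP => y yS; have [->|nyx] := eqVneq y x; first exact: x_phi.
  by apply: (subsetP (subset_phi Sigma _)); rewrite !inE nyx.
have /setP/(_ x) := minS _ (hg_transversal_phi trS sSphi) (subsetDl S [set x]).
by rewrite !inE eqxx xS.
Qed.

End ComplementTransversals.

Theorem lemma2 (T : finType) (Sigma : impl_base T) (Bp : {set {set T}}) :
  closed_antichain Sigma Bp ->
  let H := [set ~: B | B in Bp] in
  (forall S : {set T}, hg_transversal H S ->
     forall Ss, Ss \in spex Sigma S -> hg_transversal H Ss) /\
  (forall S : {set T}, minimal_transversal H S -> independent Sigma S).
Proof.
move=> [Bp_closed _] H; split; last exact: minimal_transversal_independent.
move=> S trS Ss; rewrite inE => /and3P[_ sSphi _].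
exact: hg_transversal_phi trS sSphi.
Qed.
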